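(* Let $(X_n)_{n\ge0}$ be simple random walk on a finite rooted tree $T$ with a self-loop at the root, started at $v_0$, with stationary distribution $\pi$, and let $\eta$ be an optimal strong stationary time for it. Let $\tau$ be a random time independent of $(X,\eta)$ with $0<\tau<\infty$ almost surely, and assume $P_{v_0}(\eta<\tau)>0$. Then for every vertex $v$, \[ P_{v_0}\big(X_{\tau-1}=v\,\big|\,\eta<\tau\big)=\pi(v). \]
   Context: Degrees count the self-loop twice; simple random walk moves from $v$ along a uniformly chosen edge-end at $v$, so $\pi(v)=\deg(v)/\sum_z\deg(z)$. A strong stationary time for the walk started at $v_0$ is a stopping time $\eta$ (possibly with respect to a filtration enlarged by independent extra randomness) with $P_{v_0}(X_\eta=y,\eta=k)=\pi(y)P_{v_0}(\eta=k)$ for all $y,k$; it is optimal if $P_{v_0}(\eta>t)=\max_y[1-P^t(v_0,y)/\pi(y)]$ for all $t$. *)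

From HB Require Import structures.
From mathcomp Require Import all_boot all_order all_algebra.
From mathcomp Require Import all_classical all_reals all_analysis.
Set Implicit Arguments. Unset Strict Implicit. Unset Printing Implicit Defensive.
Import Order.TTheory GRing.Theory Num.Theory.
Local Open Scope classical_set_scope.
Local Open Scope ring_scope.

(* A finite tree on the vertex set V: a simple graph (symmetric, irreflexive
   adjacency relation) that is connected and has no cycle (a cycle being a
   duplicate-free cyclic sequence of at least 3 vertices with consecutive
   vertices adjacent). *)
Definition is_tree (V : finType) (adj : rel V) : Prop :=
  [/\ symmetric adj, irreflexive adj,
      (forall x y : V, connect adj x y) &
      (forall p : seq V, ucycle adj p -> (size p < 3)%N)].

(* Degree in the tree augmented by one self-loop at the root [r];
   the self-loop counts twice. *)
Definition deg (V : finType) (adj : rel V) (r v : V) : nat :=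
  (#|[set w | adj v w]| + 2 * (v == r))%N.

Definition srw {R : realType} (V : finType) (adj : rel V) (r v w : V) : R :=
  ((adj v w) + 2 * ((v == r) && (w == r)))%:R / (deg adj r v)%:R.

Fixpoint srw_pow {R : realType} (V : finType) (adj : rel V) (r : V) (t : nat)
  (x y : V) : R :=
  match t with
  | 0 => (x == y)%:R
  | t'.+1 => \sum_(z : V) srw_pow adj r t' x z * srw adj r z y
  end.

Definition stat_pi {R : realType} (V : finType) (adj : rel V) (r v : V) : R :=
  (deg adj r v)%:R / (\sum_(z : V) deg adj r z)%:R.

Section Prob.
Context {d : measure_display} {Omega : measurableType d} {R : realType}.
Context (P : probability Omega R).
Local Open Scope ereal_scope.

Definition is_filtration (F : nat -> set (set Omega)) : Prop :=
  forall n, [/\ sigma_algebra setT (F n), F n `<=` measurable & F n `<=` F n.+1].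

Definition markov_wrt (V : finType) (K : V -> V -> R)
  (F : nat -> set (set Omega)) (X : nat -> Omega -> V) : Prop :=
  (forall n v, F n [set w | X n w = v]) /\
  (forall n (A : set Omega) (v u : V), F n A ->
     P (A `&` [set w | X n w = v] `&` [set w | X n.+1 w = u])
     = (K v u)%:E * P (A `&` [set w | X n w = v])).

(* Stopping time (value None = +infinity) w.r.t. the filtration F. *)
Definition stopping_time (F : nat -> set (set Omega)) (eta : Omega -> option nat) :
  Prop := forall k, F k [set w | eta w = Some k].

Definition strong_stationary (V : finType) (pi : V -> R) (X : nat -> Omega -> V)
  (eta : Omega -> option nat) : Prop :=
  forall (y : V) (k : nat),
    P ([set w | eta w = Some k] `&` [set w | X k w = y])
    = (pi y)%:E * P [set w | eta w = Some k].

Definition eta_gt (eta : Omega -> option nat) (t : nat) : set Omega :=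
  [set w | if eta w is Some k then (t < k)%N else true].

Definition optimal_sst (V : finType) (pi : V -> R) (Pt : nat -> V -> V -> R)
  (v0 : V) (eta : Omega -> option nat) : Prop :=
  forall t : nat,
    (forall y, ((1 - Pt t v0 y / pi y)%R)%:E <= P (eta_gt eta t)) /\
    (exists y, P (eta_gt eta t) = ((1 - Pt t v0 y / pi y)%R)%:E).

Definition gen_X_eta (V : finType) (X : nat -> Omega -> V)
  (eta : Omega -> option nat) : set (set Omega) :=
  <<s [set A | (exists n v, A = [set w | X n w = v]) \/
               (exists j, A = [set w | eta w = j])] >>.

Definition indep_tau (V : finType) (X : nat -> Omega -> V)
  (eta : Omega -> option nat) (tau : Omega -> nat) : Prop :=
  forall (k : nat) (B : set Omega), gen_X_eta X eta B ->
    P ([set w | tau w = k] `&` B) = P [set w | tau w = k] * P B.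

End Prob.

From HB Require Import structures.
From mathcomp Require Import all_boot all_order all_algebra.
From mathcomp Require Import all_classical all_reals all_analysis.
Import Order.TTheory GRing.Theory Num.Theory.
Local Open Scope classical_set_scope.
Local Open Scope ring_scope.

(* After a strong stationary time the walk stays stationary: by induction on k,
   P(eta < k, X_(k-1) = y) = pi(y) P(eta < k), because {eta < k} is F_(k-1)-measurable,
   one Markov step preserves pi (the walk is reversible with respect to the degrees),
   and the new part {eta = k-1} is the strong stationary time property itself.
   Since tau is independent of (X, eta), conditioning on {tau = k} turns this into
   P(eta < tau, X_(tau-1) = v) = pi(v) P(eta < tau). *)

Section simple_random_walk.
Variables (R : realType) (V : finType) (adj : rel V) (r : V).
Hypothesis adj_sym : symmetric adj.

Definition loop_weight (z v : V) : nat := (adj z v + 2 * ((z == r) && (v == r)))%N.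

Lemma sum_loop_weight v : (\sum_z loop_weight z v)%N = deg adj r v.
Proof.
rewrite big_split /= /deg; congr (_ + _)%N.
  rewrite -sum1_card [RHS]big_mkcond /=; apply: eq_bigr => z _.
  have -> : (z \in [set w | adj v w]) = adj v z by apply/idP/idP; rewrite in_setE.
  by rewrite adj_sym; case: (adj v z).
rewrite (bigD1 r) //= eqxx big1 ?addn0 // => z /negbTE ->.
by rewrite muln0.
Qed.

(* The degree cancels; when [deg z = 0] both sides vanish since then [z] has no edge. *)
Lemma stat_pi_srw z v :
  @stat_pi R V adj r z * srw adj r z v
  = (loop_weight z v)%:R / (\sum_(y : V) deg adj r y)%:R.
Proof.
rewrite /stat_pi /srw -/(loop_weight z v).
have [d0|dn0] := eqVneq (deg adj r z) 0%N; last first.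
  by rewrite mulrC -mulrA mulKf // pnatr_eq0.
have : loop_weight z v = 0%N.
  move: d0; rewrite /deg /loop_weight => /eqP; rewrite addn_eq0 => /andP[/eqP c0].
  case: (z == r) => //= _; rewrite muln0 addn0.
  apply/eqP; rewrite eqb0; apply/negP => azv.
  have v_nbr : v \in [set w | adj z w] by rewrite in_setE.
  by move/card0_eq: c0 => /(_ v); rewrite v_nbr.
by move->; rewrite !mul0r mulr0.
Qed.

Lemma srw_stationary v :
  \sum_z @stat_pi R V adj r z * srw adj r z v = stat_pi adj r v.
Proof.
under eq_bigr do rewrite stat_pi_srw.
by rewrite -mulr_suml -natr_sum sum_loop_weight.
Qed.

End simple_random_walk.

Lemma sigma_algebra_setU {T : Type} {S : set (set T)} {A B : set T} :
  sigma_algebra setT S -> S A -> S B -> S (A `|` B).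
Proof.
move=> [_ _ S_bigcup] SA SB.
have -> : A `|` B = \bigcup_k (if k is 0%N then A else B).
  apply/seteqP; split => w /=; first by case => h; [exists 0%N | exists 1%N].
  by case => -[|k] _ h; [left | right].
by apply: S_bigcup => -[|k].
Qed.

Lemma sigma_algebra_setI {T : Type} {S : set (set T)} {A B : set T} :
  sigma_algebra setT S -> S A -> S B -> S (A `&` B).
Proof.
move=> SS SA SB; have [_ S_setD _] := SS.
rewrite -[A `&` B]setCK setCI -setTD.
by apply: (S_setD); apply: sigma_algebra_setU => //; rewrite -setTD; apply: (S_setD).
Qed.

Section measure_partitions.
Context {d : measure_display} {T : measurableType d} {R : realType}.
Variable mu : {measure set T -> \bar R}.

Lemma measure_partition_finType {V : finType} (f : T -> V) (C : set T) :
  measurable C -> (forall z, measurable [set w | f w = z]) ->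
  mu C = (\sum_z mu (C `&` [set w | f w = z]))%E.
Proof.
move=> mC mf; rewrite fsbig_seq ?index_enum_uniq // -measure_fin_bigcup //.
- congr (mu _); apply/seteqP; split => [w Cw | w [z _ []] //].
  by exists (f w) => //=; rewrite mem_index_enum.
- by move=> z1 z2 _ _ [w [[_ <-] [_ <-]]].
- by move=> z _; apply: measurableI.
Qed.

Lemma level_sets_bigcup (tau : T -> nat) (A : nat -> set T) :
  [set w | A (tau w) w] = \bigcup_k ([set w | tau w = k] `&` A k).
Proof.
apply/seteqP; split => [w Aw | w [k _ [<-]] //].
by exists (tau w).
Qed.

Lemma measure_level_sets_scale (tau : T -> nat) (A B : nat -> set T) (c : R) :
  (forall k, measurable ([set w | tau w = k] `&` A k)) ->
  (forall k, measurable ([set w | tau w = k] `&` B k)) ->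
  (forall k, mu ([set w | tau w = k] `&` B k)
             = (c%:E * mu ([set w | tau w = k] `&` A k))%E) ->
  mu [set w | B (tau w) w] = (c%:E * mu [set w | A (tau w) w])%E.
Proof.
move=> mA mB scale.
have levels_disj (S : nat -> set T) : trivIset setT (fun k => [set w | tau w = k] `&` S k).
  by move=> i j _ _ [w [[<- _] [<- _]]].
rewrite !level_sets_bigcup !measure_semi_bigcup //;
  try by [apply: bigcup_measurable => k _].
rewrite -nneseriesZl; last by move=> k _; apply: measure_ge0.
by apply: eq_eseriesr => k _.
Qed.

End measure_partitions.

Definition eta_lt {T : Type} (eta : T -> option nat) (k : nat) : set T :=
  [set w | exists2 j, eta w = Some j & (j < k)%N].

Lemma eta_lt0 (T : Type) (eta : T -> option nat) : eta_lt eta 0 = set0.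
Proof. by apply/seteqP; split => w // [j _]. Qed.

Lemma eta_ltS (T : Type) (eta : T -> option nat) (k : nat) :
  eta_lt eta k.+1 = eta_lt eta k `|` [set w | eta w = Some k].
Proof.
apply/seteqP; split => w /=.
  case=> j eta_j; rewrite ltnS leq_eqVlt => /orP[/eqP <- | j_lt]; first by right.
  by left; exists j.
by case=> [[j eta_j j_lt] | eta_k]; [exists j => //; apply: ltnW | exists k].
Qed.

Lemma eta_lt_disjoint (T : Type) (eta : T -> option nat) (k : nat) :
  eta_lt eta k `&` [set w | eta w = Some k] = set0.
Proof.
apply/seteqP; split => w // [[j eta_j j_lt] /=].
by rewrite eta_j => -[j_k]; move: j_lt; rewrite j_k ltnn.
Qed.

Lemma sigma_algebra_eta_lt {T : Type} {S : set (set T)} (eta : T -> option nat) (k : nat) :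
  sigma_algebra setT S -> (forall j, (j < k)%N -> S [set w | eta w = Some j]) ->
  S (eta_lt eta k).
Proof.
move=> SS; elim: k => [|k IH] S_eta; first by rewrite eta_lt0; case: SS.
rewrite eta_ltS; apply: sigma_algebra_setU => //.
  by apply: IH => j j_lt; apply: S_eta; apply: ltnW.
exact: S_eta.
Qed.

Section strong_stationary_time.
Context {d : measure_display} {Omega : measurableType d} {R : realType}.
Context {P : probability Omega R} {V : finType} {K : V -> V -> R} {stat : V -> R}.
Context {F : nat -> set (set Omega)} {X : nat -> Omega -> V} {eta : Omega -> option nat}.
Hypotheses (F_filtration : is_filtration F) (X_markov : markov_wrt P K F X)
  (eta_stopping : stopping_time F eta) (eta_sst : strong_stationary P stat X eta)
  (stat_invariant : forall v, \sum_z stat z * K z v = stat v).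

(* [measureU] states its result through the content coercion of [P], which
   [rewrite] does not identify with [P] itself. *)
Let contentE A : (P : {content set Omega -> \bar R}) A = P A := erefl.

Lemma filtration_measurable n A : F n A -> measurable A.
Proof. by have [_ + _] := F_filtration n; apply. Qed.

Lemma measurable_X n y : measurable [set w | X n w = y].
Proof. exact/filtration_measurable/X_markov.1. Qed.

Lemma measurable_eta j : measurable [set w | eta w = Some j].
Proof. exact/filtration_measurable/eta_stopping. Qed.

Lemma measurable_eta_lt k : measurable (eta_lt eta k).
Proof.
apply: sigma_algebra_eta_lt => [|j _]; last exact: measurable_eta.
exact: sigma_algebra_measurable.
Qed.

Lemma eta_lt_adapted k : F k (eta_lt eta k.+1).
Proof.
have [F_sigma _ _] := F_filtration k.
apply: sigma_algebra_eta_lt => // j; rewrite ltnS => j_le.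
have F_incr n : F n `<=` F n.+1 by have [] := F_filtration n.
exact: (homo_leq (@subset_refl _) (@subset_trans _) F_incr j_le) (eta_stopping j).
Qed.

Lemma markov_step n A y : F n A ->
  P (A `&` [set w | X n.+1 w = y])
  = (\sum_z (K z y)%:E * P (A `&` [set w | X n w = z]))%E.
Proof.
move=> FA; rewrite (measure_partition_finType P (X n)); last exact: measurable_X.
  by apply: eq_bigr => z _; rewrite setIAC; apply: X_markov.2.
by apply: measurableI; [exact: filtration_measurable FA | exact: measurable_X].
Qed.

Lemma eta_lt_stationary k y :
  P (eta_lt eta k `&` [set w | X k.-1 w = y]) = ((stat y)%:E * P (eta_lt eta k))%E.
Proof.
case: k => [|k]; first by rewrite eta_lt0 set0I measure0 mule0.
elim: k y => [|k IH] y; first by rewrite eta_ltS eta_lt0 set0U; apply: eta_sst.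
set L := eta_lt eta k.+1; set E := [set w | eta w = Some k.+1].
have mL : measurable L := measurable_eta_lt _.
have mE : measurable E := measurable_eta _.
have LE0 : L `&` E = set0 := eta_lt_disjoint _ _ _.
rewrite eta_ltS -/L -/E setIUl [LHS]measureU; first last.
- by rewrite setIACA LE0 set0I.
- by apply: measurableI => //; apply: measurable_X.
- by apply: measurableI => //; apply: measurable_X.
rewrite measureU // muleDr ?fin_num_adde_defr ?fin_num_measure // !contentE.
rewrite eta_sst markov_step; last exact: eta_lt_adapted.
congr (_ + _)%E.
under eq_bigr do rewrite IH.
rewrite -(fineK (fin_num_measure _ _ mL)) -stat_invariant -EFinM mulr_suml -sumEFin.
by apply: eq_bigr => z _; rewrite -!EFinM mulrCA mulrA.
Qed.

End strong_stationary_time.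

Theorem lemma2p10
  (V : finType) (adj : rel V) (root v0 : V)
  (d : measure_display) (Omega : measurableType d) (R : realType)
  (P : probability Omega R)
  (F : nat -> set (set Omega)) (X : nat -> Omega -> V)
  (eta : Omega -> option nat) (tau : Omega -> nat) :
  is_tree adj ->
  is_filtration F ->
  P [set w | X 0%N w = v0] = 1%E ->
  markov_wrt P (@srw R V adj root) F X ->
  stopping_time F eta ->
  strong_stationary P (@stat_pi R V adj root) X eta ->
  optimal_sst P (@stat_pi R V adj root) (@srw_pow R V adj root) v0 eta ->
  (forall k, measurable [set w | tau w = k]) ->
  P [set w | tau w = 0%N] = 0%E ->
  indep_tau P X eta tau ->
  let E_lt := [set w | exists2 j, eta w = Some j & (j < tau w)%N] in
  (0 < P E_lt)%E ->
  forall v : V,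
    fine (P (E_lt `&` [set w | X (tau w).-1 w = v])) / fine (P E_lt)
    = @stat_pi R V adj root v.
Proof.
move=> [adj_sym _ _ _] F_filt _ X_markov eta_stop eta_sst _ m_tau _ tau_indep E_lt.
move=> PE_gt0 v; set pi := @stat_pi R V adj root.
have pi_invariant := @srw_stationary R V adj root adj_sym.
pose A := eta_lt eta; pose B k := A k `&` [set w | X k.-1 w = v].
have gen_sigma : sigma_algebra setT (gen_X_eta X eta) := smallest_sigma_algebra _ _.
have genA k : gen_X_eta X eta (A k).
  apply: (sigma_algebra_eta_lt eta k gen_sigma) => j _.
  by apply: sub_sigma_algebra; right; exists (Some j).
have genB k : gen_X_eta X eta (B k).
  apply: (sigma_algebra_setI gen_sigma (genA k)).
  by apply: sub_sigma_algebra; left; exists k.-1, v.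
have mA k : measurable (A k) := measurable_eta_lt F_filt eta_stop k.
have mB k : measurable (B k) := measurableI _ _ (mA k) (measurable_X F_filt X_markov _ _).
have scale_level k : P ([set w | tau w = k] `&` B k)
    = ((pi v)%:E * P ([set w | tau w = k] `&` A k))%E.
  rewrite (tau_indep k _ (genB k)) (tau_indep k _ (genA k)).
  by rewrite (eta_lt_stationary F_filt X_markov eta_stop eta_sst pi_invariant) muleCA.
have E_lt_v : P (E_lt `&` [set w | X (tau w).-1 w = v]) = ((pi v)%:E * P E_lt)%E.
  apply: (measure_level_sets_scale _ _ A B) scale_level => k.
    exact: measurableI (m_tau k) (mA k).
  exact: measurableI (m_tau k) (mB k).
have mE : measurable E_lt.
  change (measurable [set w | A (tau w) w]); rewrite level_sets_bigcup.
  by apply: bigcup_measurable => k _; apply: measurableI (m_tau k) (mA k).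
rewrite E_lt_v -(fineK (fin_num_measure _ _ mE)) /=.
rewrite -(fineK (fin_num_measure _ _ mE)) lte_fin in PE_gt0.
by rewrite mulfK // gt_eqF.
Qed.
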